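(* Let $p$ be a prime with $p\equiv 5\pmod 8$ or $p\equiv 7\pmod 8$, and let $(P_n)_{n\ge0}$ be the Catalan-Larcombe-French numbers. Then $p\mid P_{\frac{p-1}{2}}$.
   Context: The Catalan-Larcombe-French numbers are defined by $P_0=1$, $P_1=8$ and, for $n\ge 2$, $n^2P_n-8(3n^2-3n+1)P_{n-1}+128(n-1)^2P_{n-2}=0$. *)

From mathcomp Require Import all_boot all_order all_algebra.
Set Implicit Arguments. Unset Strict Implicit. Unset Printing Implicit Defensive.
Import Order.TTheory GRing.Theory Num.Theory.
Local Open Scope ring_scope.

(* Catalan-Larcombe-French numbers, computed in rat via the recurrence
   n^2 P_n = 8(3n^2-3n+1) P_{n-1} - 128 (n-1)^2 P_{n-2}, P_0 = 1, P_1 = 8. *)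
Fixpoint clf_pair (n : nat) : rat * rat :=
  (* returns (P_n, P_{n+1}) *)
  match n with
  | 0%N => (1, 8)
  | k.+1 =>
      let: (a, b) := clf_pair k in
      let m : rat := (k.+2)%:R in
      (b, (8 * (3 * m ^+ 2 - 3 * m + 1) * b - 128 * (m - 1) ^+ 2 * a) / m ^+ 2)
  end.

Definition clf (n : nat) : rat := (clf_pair n).1.

From mathcomp Require Import all_boot all_order all_algebra finfield.
From mathcomp Require Import ring lra zify.
Set Implicit Arguments. Unset Strict Implicit. Unset Printing Implicit Defensive.
Import GRing.Theory Num.Theory.

(* P_n = 2^n a_n with a_n = sum_k C(n,2k) C(2k,k)^2 4^(n-2k), and a_n satisfies the
   defining recurrence by a telescoping certificate in k.  Modulo p = 2n+1 the recurrence
   can be run backwards, which gives P_(p-1-j) 128^j = P_(p-1) P_j; moreover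
   C(p-1,i) = (-1)^i and C(2k,k) = (-4)^k C(n,k), so Vandermonde's identity yields
   P_(p-1) = (-1)^n.  At j = n this reads P_n ((-2)^n)^7 = P_n, and by Gauss's lemma
   (-2)^n = (-1)^(n + ceil(n/2)) = -1 exactly when p = 5, 7 (mod 8). *)

Lemma mul_bin_central k : k.+1 * 'C(k.+1.*2, k.+1) = 2 * k.*2.+1 * 'C(k.*2, k).
Proof.
have up : k.+1 * 'C(k.+1.*2, k.+1) = k.+1.*2 * 'C(k.*2.+1, k).
  by rewrite mul_bin_diag.
have down : k.*2.+1 * 'C(k.*2, k) = k.+1 * 'C(k.*2.+1, k).
  by rewrite mul_bin_down -addnn subSn ?leq_addr // addnK.
apply/eqP; rewrite -(eqn_pmul2l (ltn0Sn k)) up -!mulnA down -mul2n; apply/eqP; ring.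
Qed.

(* Locked, so that rewriting casts with natrD/natrM does not unfold it. *)
Definition clf_term (n k : nat) : nat :=
  locked ('C(n, k.*2) * 'C(k.*2, k) ^ 2 * 4 ^ (n - k.*2)).

Lemma clf_termE n k : clf_term n k = 'C(n, k.*2) * 'C(k.*2, k) ^ 2 * 4 ^ (n - k.*2).
Proof. by rewrite /clf_term -lock. Qed.

Lemma clf_term_small n k : n < k.*2 -> clf_term n k = 0.
Proof. by move=> lt_n_2k; rewrite clf_termE bin_small. Qed.

Definition clf_sum (n : nat) : nat := \sum_(k < n.+1) clf_term n k.

Definition clf_nat (n : nat) : nat := 2 ^ n * clf_sum n.

Lemma sum_clf_term_pad n N d :
  n < N.*2 -> \sum_(k < N + d) clf_term n k = \sum_(k < N) clf_term n k.
Proof.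
move=> lt_n_2N; elim: d => [|d IHd]; first by rewrite addn0.
by rewrite addnS big_ord_recr /= IHd clf_term_small ?addn0 //; lia.
Qed.

Lemma clf_sum_widen n N : n < N.*2 -> \sum_(k < N) clf_term n k = clf_sum n.
Proof.
move=> lt_n_2N; rewrite /clf_sum; have [le_N_n1 | lt_n1_N] := leqP N n.+1.
  by rewrite -(subnKC le_N_n1) sum_clf_term_pad.
by rewrite -(subnKC (ltnW lt_n1_N)) sum_clf_term_pad //; lia.
Qed.

Lemma prod_evens t : \prod_(0 <= i < t) (i.+1).*2 = 2 ^ t * t`!.
Proof. by elim: t => [|t IHt]; rewrite ?big_nil // big_nat_recr //= IHt factS expnS -mul2n; ring. Qed.

Lemma prod_evens_odds t :
  \prod_(0 <= i < t) (i.+1).*2 * \prod_(0 <= i < t) i.*2.+1 = (t.*2)`!.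
Proof.
elim: t => [|t IHt]; first by rewrite !big_nil.
by rewrite !big_nat_recr //= doubleS !factS -IHt; ring.
Qed.

Lemma prod_half_evens_odds n :
  \prod_(0 <= i < n./2) (i.+1).*2 * \prod_(0 <= i < uphalf n) i.*2.+1 = n`!.
Proof.
rewrite uphalf_half -[in RHS](odd_double_half n); case: (odd n) => /=.
  by rewrite add1n big_nat_recr //= mulnA prod_evens_odds factS mulnC.
by rewrite prod_evens_odds.
Qed.

Local Open Scope ring_scope.

Lemma natr_clf_termSl n k : (n.+1%:R - k.*2%:R) * (clf_term n.+1 k)%:R
  = 4 * n.+1%:R * (clf_term n k)%:R :> rat.
Proof.
have [le_2k_n | lt_n_2k] := leqP k.*2 n; last first.
  rewrite (clf_term_small lt_n_2k) mulr0.
  have [/clf_term_small-> | le_2k_Sn] := ltnP n.+1 k.*2; first by rewrite mulr0.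
  by rewrite (_ : k.*2 = n.+1) ?subrr ?mul0r //; lia.
rewrite -natrB 1?ltnW // -!natrM; congr _%:R.
rewrite !clf_termE [in (4 ^ _)%N]subSn // expnS.
transitivity ((n.+1 - k.*2) * 'C(n.+1, k.*2) * 'C(k.*2, k) ^ 2 * 4 ^ (n - k.*2).+1)%N; first ring.
by rewrite -[(_ * 'C(n.+1, _))%N]mul_bin_down /= [(4 ^ _.+1)%N]expnS; ring.
Qed.

Lemma natr_clf_termSr n k : 8 * k.+1%:R ^+ 3 * (clf_term n k.+1)%:R
  = (n%:R - k.*2%:R) * (n%:R - k.*2.+1%:R) * k.*2.+1%:R * (clf_term n k)%:R :> rat.
Proof.
have [lt_n_2k | le_2k_n] := ltnP n k.*2.
  by rewrite !clf_term_small ?mulr0 // doubleS; lia.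
have [lt_n_2k2 | le_2k2_n] := ltnP n k.+1.*2.
  rewrite (clf_term_small lt_n_2k2) mulr0.
  have [->|->] : n = k.*2 \/ n = k.*2.+1 by rewrite doubleS in lt_n_2k2; lia.
    by rewrite subrr !mul0r.
  by rewrite subrr mulr0 !mul0r.
rewrite doubleS in le_2k2_n *.
have le_2k1_n : (k.*2.+1 <= n)%N by lia.
rewrite -!natrB // -natrX -!natrM; congr _%:R.
have bin2 := mul_bin_left n k.*2.+1; have bin1 := mul_bin_left n k.*2.
have cen := mul_bin_central k; rewrite doubleS in cen.
have pow : (4 ^ (n - k.*2) = 16 * 4 ^ (n - k.*2.+2))%N.
  by rewrite (_ : n - k.*2 = (n - k.*2.+2).+2)%N ?expnS ?mulnA //; lia.
rewrite !clf_termE doubleS.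
transitivity (4 * (k.*2.+2 * 'C(n, k.*2.+2)) * (k.+1 * 'C(k.*2.+2, k.+1)) ^ 2
  * 4 ^ (n - k.*2.+2))%N; first by rewrite -!addnn; ring.
rewrite bin2 cen.
transitivity (16 * (n - k.*2.+1) * k.*2.+1 * (k.*2.+1 * 'C(n, k.*2.+1)) * 'C(k.*2, k) ^ 2
  * 4 ^ (n - k.*2.+2))%N; first ring.
by rewrite bin1 pow; ring.
Qed.

Definition clf_cert (m k : nat) : nat :=
  if k is j.+1 then 16 * m.+1 * j.*2.+1 * clf_term m j else 0.

Lemma clf_term_telescope m k :
  (m.+2 ^ 2 * clf_term m.+2 k + 32 * m.+1 ^ 2 * clf_term m k + clf_cert m k.+1
   = 4 * (3 * m.+2 * m.+1 + 1) * clf_term m.+1 k + clf_cert m k)%N.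
Proof.
apply/eqP; rewrite -(eqr_nat rat) /clf_cert; apply/eqP; case: k => [|j].
  rewrite !clf_termE !bin0 !subn0 !expnS !expn0 -[m.+2]addn2 -[m.+1]addn1.
  by rewrite !(natrD, natrM); ring.
have nz1 : 4 * m.+1%:R != 0 :> rat by rewrite -natrM pnatr_eq0.
have nz2 : 4 * m.+2%:R != 0 :> rat by rewrite -natrM pnatr_eq0.
have nz3 : 8 * j.+1%:R ^+ 3 != 0 :> rat by rewrite -natrX -natrM pnatr_eq0 muln_eq0 expn_eq0.
rewrite !(natrD, natrM, natrX).
rewrite (canRL (mulKf nz1) (esym (natr_clf_termSl m j.+1))).
rewrite (canRL (mulKf nz2) (esym (natr_clf_termSl m.+1 j.+1))).
rewrite (canRL (mulKf nz3) (natr_clf_termSr m.+2 j)).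
rewrite (canRL (mulKf nz1) (esym (natr_clf_termSl m j))).
rewrite (canRL (mulKf nz2) (esym (natr_clf_termSl m.+1 j))).
have natr_double i : i.*2%:R = 2 * i%:R :> rat by rewrite -mul2n natrM.
rewrite -!natr1 !natr_double -!natr1.
by field; rewrite !natr1 !pnatr_eq0.
Qed.

Lemma clf_sum_rec m : (m.+2 ^ 2 * clf_sum m.+2 + 32 * m.+1 ^ 2 * clf_sum m
  = 4 * (3 * m.+2 * m.+1 + 1) * clf_sum m.+1)%N.
Proof.
have cert_shift : (\sum_(k < m.+3) clf_cert m k.+1 = \sum_(k < m.+3) clf_cert m k)%N.
  by rewrite big_ord_recr [RHS]big_ord_recl /= clf_term_small ?muln0 ?addn0 //; lia.
have summed : (m.+2 ^ 2 * \sum_(k < m.+3) clf_term m.+2 k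
    + 32 * m.+1 ^ 2 * \sum_(k < m.+3) clf_term m k + \sum_(k < m.+3) clf_cert m k.+1
  = 4 * (3 * m.+2 * m.+1 + 1) * \sum_(k < m.+3) clf_term m.+1 k
    + \sum_(k < m.+3) clf_cert m k)%N.
  by rewrite !big_distrr -!big_split; apply: eq_bigr => k _; apply: clf_term_telescope.
move: summed; rewrite cert_shift => /addIn.
by rewrite !clf_sum_widen //; lia.
Qed.

Lemma clf_nat_rec m : (m.+2 ^ 2 * clf_nat m.+2 + 128 * m.+1 ^ 2 * clf_nat m
  = 8 * (3 * m.+2 * m.+1 + 1) * clf_nat m.+1)%N.
Proof.
rewrite /clf_nat !expnS.
transitivity (4 * 2 ^ m * (m.+2 ^ 2 * clf_sum m.+2 + 32 * m.+1 ^ 2 * clf_sum m))%N; first ring.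
by rewrite clf_sum_rec; ring.
Qed.

Lemma clf_pairE n : clf_pair n = ((clf_nat n)%:R, (clf_nat n.+1)%:R).
Proof.
elim: n => [|k IHk].
  by rewrite /clf_nat /clf_sum !big_ord_recr !big_ord0 /= !clf_termE.
rewrite /= IHk; congr (_, _).
have nz : k.+2%:R ^+ 2 != 0 :> rat by rewrite -natrX pnatr_eq0.
apply: (mulIf nz); rewrite divfK //.
have := congr1 (fun x => x%:R : rat) (clf_nat_rec k); rewrite /= !(natrD, natrM, natrX).
rewrite -!natr1; lra.
Qed.

Lemma clf_nat0 : clf_nat 0 = 1%N.
Proof. by rewrite /clf_nat /clf_sum big_ord_recr big_ord0 /= clf_termE. Qed.

Lemma clf_nat1 : clf_nat 1 = 8%N.
Proof. by rewrite /clf_nat /clf_sum !big_ord_recr big_ord0 /= !clf_termE. Qed.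

Definition clf_residual (R : nzRingType) (x : nat -> R) (m : nat) : R :=
  m.+2%:R ^+ 2 * x m.+2 + 128 * m.+1%:R ^+ 2 * x m - 8 * (3 * m.+2%:R * m.+1%:R + 1) * x m.+1.

Lemma clf_residual_nat (R : nzRingType) m : clf_residual (fun n => (clf_nat n)%:R : R) m = 0.
Proof.
apply/eqP; rewrite subr_eq0 /=; apply/eqP; move: (clf_nat_rec m).
move: (clf_nat m) (clf_nat m.+1) (clf_nat m.+2) => a b c /(congr1 (fun x => x%:R : R)).
by rewrite !(natrD, natrM, natrX).
Qed.

Lemma clf_residual_unique (F : fieldType) N (x y : nat -> F) c :
    (forall i, (0 < i < N)%N -> i%:R != 0 :> F) ->
    (forall m, (m.+2 < N)%N -> clf_residual x m = 0) ->
    (forall m, (m.+2 < N)%N -> clf_residual y m = 0) ->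
    y 0%N = c * x 0%N -> y 1%N = c * x 1%N ->
  forall m, (m < N)%N -> y m = c * x m.
Proof.
move=> charN resx resy y0 y1.
have step m : (m.+1 < N)%N -> y m = c * x m /\ y m.+1 = c * x m.+1.
  elim: m => [|m IHm] lt_m_N; first by [].
  have [ym ym1] := IHm (ltnW lt_m_N); split=> //.
  have nz : m.+2%:R ^+ 2 != 0 :> F by rewrite expf_neq0 // charN.
  have : m.+2%:R ^+ 2 * y m.+2 - clf_residual y m
       = m.+2%:R ^+ 2 * (c * x m.+2) - c * clf_residual x m.
    by rewrite /clf_residual ym ym1; ring.
  by rewrite resx // resy // mulr0 !subr0 => /(mulfI nz).
by case=> [|m] lt_m_N; [rewrite y0 | case: (step m lt_m_N)].
Qed.

Section PrimeField.

Variable p : nat.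
Hypothesis p_pr : prime p.

Lemma natf_Fp_eq0 a : ((a%:R : 'F_p) == 0) = (p %| a)%N.
Proof. by rewrite (dvdn_pcharf (pchar_Fp p_pr)). Qed.

Lemma natf_Fp_neq0 a : (0 < a < p)%N -> (a%:R : 'F_p) != 0.
Proof. by rewrite natf_Fp_eq0 => /andP[a_gt0 a_lt_p]; rewrite gtnNdvd. Qed.

Lemma natrB_Fp a : (a <= p)%N -> ((p - a)%:R : 'F_p) = - a%:R.
Proof. by move=> le_a_p; rewrite natrB // pchar_Fp_0 // sub0r. Qed.

Lemma Fp_fermat (x : 'F_p) : x != 0 -> x ^+ p.-1 = 1.
Proof.
move=> x_nz; apply: (mulIf x_nz); rewrite mul1r -exprSr prednK ?prime_gt0 //.
by have := expf_card x; rewrite card_Fp.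
Qed.

Lemma bin_pred_Fp i : (i < p)%N -> ('C(p.-1, i)%:R : 'F_p) = (-1) ^+ i.
Proof.
elim: i => [|i IHi] lt_i_p; first by rewrite bin0.
have : ('C(p.-1, i.+1) + 'C(p.-1, i))%:R == 0 :> 'F_p.
  by rewrite -binS prednK ?prime_gt0 // natf_Fp_eq0 prime_dvd_bin //; lia.
by rewrite natrD addr_eq0 IHi 1?ltnW // exprS mulN1r => /eqP.
Qed.

Lemma natf_fact_Fp_neq0 k : (k < p)%N -> k`!%:R != 0 :> 'F_p.
Proof.
elim: k => [|k IHk] lt_k_p; first exact: oner_neq0.
by rewrite factS natrM mulf_neq0 ?IHk ?natf_Fp_neq0 //; lia.
Qed.

Lemma clf_nat_reflect j : (j < p)%N ->
  (clf_nat (p.-1 - j))%:R * 128 ^+ j = (clf_nat p.-1)%:R * (clf_nat j)%:R :> 'F_p.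
Proof.
have p_gt1 := prime_gt1 p_pr.
have natf_pred i : (i < p)%N -> ((p.-1 - i)%:R : 'F_p) = - i.+1%:R.
  by move=> lt_i_p; rewrite (_ : p.-1 - i = p - i.+1)%N ?natrB_Fp //; lia.
(* Since p.-1 - j = -(j+1) in 'F_p, the reflected sequence satisfies the same recurrence. *)
apply: (clf_residual_unique (x := fun n => (clf_nat n)%:R)
          (y := fun j => (clf_nat (p.-1 - j))%:R * 128 ^+ j)).
- by move=> i; apply: natf_Fp_neq0.
- by move=> m _; apply: clf_residual_nat.
- move=> m lt_m2_p; have := clf_residual_nat 'F_p (p.-1 - m.+2).
  rewrite /clf_residual -!subSn ?subSS; try lia.
  rewrite !(subSn, natf_pred) ?subSS; try lia.
  move=> res; transitivity (128 ^+ m.+1 * 0 : 'F_p); last exact: mulr0.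
  by rewrite -res [128 ^+ m.+2]exprS [128 ^+ m.+1]exprS; ring.
- by rewrite /= subn0 clf_nat0 expr0 !mulr1.
have pred_p : (p.-1%:R : 'F_p) = -1 by rewrite -subn1 natrB_Fp // ltnW.
have := clf_residual_nat 'F_p p.-2; rewrite /clf_residual /=.
have -> : p.-2.+2 = p by lia.
have -> : p.-2.+1 = p.-1 by lia.
rewrite pchar_Fp_0 // pred_p /= subn1 clf_nat1 => res.
apply/eqP; rewrite -subr_eq0; apply/eqP; rewrite -res; ring.
Qed.

Section OddPrimeField.

Variable n : nat.
Hypothesis p_eq : p = n.*2.+1.

Lemma bin_central_Fp k : (k <= n)%N -> ('C(k.*2, k)%:R : 'F_p) = (-4) ^+ k * 'C(n, k)%:R.
Proof.
have two_n1 : 2 * n%:R + 1 = 0 :> 'F_p.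
  by rewrite -(pchar_Fp_0 p_pr) p_eq -[n.*2.+1]addn1 natrD -mul2n natrM.
elim: k => [|k IHk] le_k_n; first by rewrite !bin0 mul1r.
have k1_nz : k.+1%:R != 0 :> 'F_p by rewrite natf_Fp_neq0 //; lia.
apply: (mulfI k1_nz); rewrite -natrM mul_bin_central natrM IHk 1?ltnW //.
rewrite [RHS]mulrCA -natrM mul_bin_left !natrM natrB 1?ltnW //.
rewrite -[k.*2.+1]addn1 natrD -mul2n natrM.
apply/eqP; rewrite -subr_eq0; apply/eqP.
rewrite exprS.
transitivity ((-4) ^+ k * 'C(n, k)%:R * 2 * (2 * n%:R + 1) : 'F_p); first ring.
by rewrite two_n1 mulr0.
Qed.

Lemma two_Fp_neq0 : 2 != 0 :> 'F_p.
Proof. by apply: (natf_Fp_neq0 (a := 2)); have := prime_gt1 p_pr; rewrite p_eq; lia. Qed.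

Lemma clf_nat_pred_Fp : (clf_nat p.-1)%:R = (-1) ^+ n :> 'F_p.
Proof.
have pred_p : p.-1 = (n + n)%N by rewrite p_eq addnn.
rewrite /clf_nat natrM natrX Fp_fermat ?two_Fp_neq0 // mul1r.
rewrite -(clf_sum_widen (N := n.+1)); last by rewrite pred_p; lia.
rewrite natr_sum.
transitivity (\sum_(k < n.+1) ('C(n, k) * 'C(n, n - k))%:R : 'F_p).
  apply: eq_bigr => -[k /= lt_k_n1] _.
  rewrite clf_termE !natrM !natrX bin_pred_Fp ?bin_central_Fp ?bin_sub; try lia.
  have sign : (-1) ^+ k.*2 = 1 :> 'F_p by rewrite -mul2n exprM sqrrN !expr1n.
  have pow : ((-4) ^+ k) ^+ 2 * 4 ^+ (p.-1 - k.*2) = 1 :> 'F_p.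
    rewrite -exprM mulnC exprM sqrrN -exprM mul2n -exprD subnKC; last lia.
    by rewrite Fp_fermat // (_ : 4 = 2 * 2) ?mulf_neq0 ?two_Fp_neq0 //; ring.
  rewrite sign mul1r; transitivity ('C(n, k)%:R * 'C(n, k)%:R
    * ((-4) ^+ k ^+ 2 * 4 ^+ (p.-1 - k.*2)) : 'F_p); first ring.
  by rewrite pow mulr1.
by rewrite -natr_sum binomial.Vandermonde -pred_p bin_pred_Fp // p_eq; lia.
Qed.

Lemma expr2_half_Fp : 2 ^+ n = (-1) ^+ uphalf n :> 'F_p.
Proof.
have lt_n_p : (n < p)%N by rewrite p_eq; lia.
apply: (mulIf (natf_fact_Fp_neq0 lt_n_p)).
(* Gauss's lemma: the even numbers 2i with n/2 < i <= n are minus the odd numbers below n. *)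
have -> : 2 ^+ n * n`!%:R = \prod_(0 <= i < n) (i.+1).*2%:R :> 'F_p.
  by rewrite -natr_prod prod_evens natrM natrX.
rewrite (big_cat_nat _ (n := n./2)) //=; last lia.
have -> : \prod_(n./2 <= i < n) (i.+1).*2%:R
    = (-1) ^+ uphalf n * \prod_(0 <= i < uphalf n) i.*2.+1%:R :> 'F_p.
  rewrite -[X in _ ^+ X](subn0 (uphalf n)) -prodr_const_nat -big_split /=.
  rewrite -{1}[n./2]add0n big_addn (_ : n - n./2 = uphalf n)%N; last lia.
  rewrite [RHS]big_nat_rev /=; apply: eq_big_nat => i lt_i_u.
  by rewrite mulN1r -natrB_Fp p_eq; [congr _%:R | ]; lia.
by rewrite -(prod_half_evens_odds n) natrM !natr_prod; ring.
Qed.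

Lemma clf_nat_half_Fp : (clf_nat n)%:R * ((-2) ^+ n) ^+ 7 = (clf_nat n)%:R :> 'F_p.
Proof.
have lt_n_p : (n < p)%N by rewrite p_eq; lia.
have := clf_nat_reflect lt_n_p; rewrite (_ : p.-1 - n = n)%N ?clf_nat_pred_Fp; last by rewrite p_eq; lia.
have -> : ((-2) ^+ n) ^+ 7 = (-1) ^+ n * 128 ^+ n :> 'F_p.
  by rewrite -exprM mulnC exprM -exprMn; congr (_ ^+ _); ring.
move=> reflect_n; rewrite mulrCA reflect_n mulrA -exprMn mulrNN mulr1.
by rewrite expr1n mul1r.
Qed.

Lemma clf_nat_half_dvd : odd (n + uphalf n) -> (p %| clf_nat n)%N.
Proof.
move=> odd_n_uphalf; have neg2 : (-2) ^+ n = -1 :> 'F_p.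
  by rewrite -mulN1r exprMn expr2_half_Fp -exprD -signr_odd odd_n_uphalf.
have := clf_nat_half_Fp; rewrite neg2 -signr_odd /= expr1 mulrN1 => half.
have two_P : 2 * (clf_nat n)%:R = 0 :> 'F_p.
  by rewrite -[RHS](subrr (clf_nat n)%:R) -{3}half; ring.
move/eqP: two_P; rewrite mulf_eq0 (negPf two_Fp_neq0) /=.
by rewrite natf_Fp_eq0.
Qed.

End OddPrimeField.

End PrimeField.

Theorem corollary6 (p : nat) :
  prime p -> (p %% 8 = 5 \/ p %% 8 = 7)%N ->
  exists m : int, clf ((p - 1) %/ 2) = m%:~R /\ (p%:Z %| m)%Z.
Proof.
move=> p_pr p_mod8; set n := ((p - 1) %/ 2)%N.
have p_eq : p = n.*2.+1 by rewrite /n; lia.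
exists (clf_nat n)%:Z; split; first by rewrite /clf clf_pairE /= pmulrn.
suff : (p %| clf_nat n)%N by [].
by apply: (clf_nat_half_dvd p_pr p_eq); rewrite /n; lia.
Qed.
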